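(* On $\overline{M_0}$ and on $\overline{M_{-1}}$ one has $\overline\delta\circ\overline{j^{aro}}=\overline{j^{aro}}\circ\overline\partial$.
   Context: Fix a finite set $C$ and a field of characteristic zero. Monomials $x^{\mathbf k}=\prod(x^a_j)^{k^a_j}$ in variables $x^a_j$ ($a\in C$, $j\ge-1$) have weight $\sum jk^a_j$, and $\mathbf k!=\prod k^a_j!$. $\overline{M_0}$ (resp. $\overline{M_{-1}}$) is a copy of the span of monomials of weight $\ge0$ (resp. $\ge-1$), the two copies being regarded as distinct. The transpose derivation is $\overline\partial x^{\mathbf k}=\sum_{j\ge0,a}k^a_jx^{\mathbf k-\mathbf e^a_j+\mathbf e^a_{j-1}}$ (acting within each copy). A tree (resp. aroma) is a finite connected directed graph with $C$-decorated vertices in which every vertex has exactly one outgoing edge except one root (resp. every vertex has exactly one outgoing edge). A tree or aroma with free edges assigns to each vertex $v$ a number $r_v\ge0$ of free edges; objects are up to isomorphism preserving decorations and the $r_v$; $\sigma(\tau)$ is the number of such automorphisms. $\overline\delta=\sum_v\overline\delta_v$ where $\overline\delta_v$ removes one free edge at $v$ (zero if $r_v=0$). With $f(v)$ the number of non-free edges ending at $v$, $\overline\Phi(\tau)=\prod_vx^{d(v)}_{f(v)+r_v-1}$. Define $\overline{j^{aro}}(x^{\kappa})=\sum_{a}\frac{\kappa!}{\sigma(a)}a$ for $x^\kappa\in\overline{M_0}$, summing over aromas with free edges with $\overline\Phi(a)=x^\kappa$, and $\overline{j^{aro}}(x^{\mathbf k})=\sum_t\frac{\mathbf k!}{\sigma(t)}t$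 for $x^{\mathbf k}\in\overline{M_{-1}}$, summing over trees with free edges with $\overline\Phi(t)=x^{\mathbf k}$ (empty sums are $0$), extended linearly. *)

From HB Require Import structures.
From mathcomp Require Import all_boot all_order all_algebra.
From mathcomp Require Import fingroup perm boolp.
Unset Printing Implicit Defensive.
Import Order.TTheory GRing.Theory Num.Theory.
Local Open Scope ring_scope.

Section Aromas.
Variable C : finType.

(* Monomials.  A variable x^a_j (a in C, j >= -1) is the pair (a, j).  *)
(* A monomial x^k is the multiset of its variables, represented by a  *)
(* list of variables taken up to permutation (compare with perm_eq).  *)
Definition var := (C * int)%type.
Definition monomial := seq var.

Definition valid_monomial (s : monomial) : bool := all (fun x => -1 <= x.2) s.

Definition weight (s : monomial) : int := \sum_(x <- s) x.2.

(* k! = prod k^a_j ! *)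
Definition mfact (s : monomial) : nat := (\prod_(x <- undup s) (count_mem x s)`!)%N.

Definition lower_at (s : monomial) (i : nat) : monomial :=
  [seq (if p.1 == i then (p.2.1, p.2.2 - 1) else p.2) | p <- zip (iota 0 (size s)) s].

Variable K : fieldType.

Definition poly := seq (K * monomial).

(* transpose derivation:  dbar x^k = sum_{j>=0,a} k^a_j x^{k - e^a_j + e^a_{j-1}}
   (summing over the positions of the list produces the multiplicity k^a_j) *)
Definition dbar (s : monomial) : poly :=
  [seq (1, lower_at s p.1) | p <- zip (iota 0 (size s)) s & 0 <= p.2.2].

(* Graphs with free edges.  Vertices are 'I_n; each vertex v carries  *)
(* its decoration d(v), its (unique) outgoing edge target (None = no  *)
(* outgoing edge) and its number r_v of free edges.                   *)
Definition graph := {n : nat & {ffun 'I_n -> C * option 'I_n * nat}}.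

Definition nv (G : graph) : nat := tag G.
Definition dec (G : graph) (v : 'I_(nv G)) : C := (tagged G v).1.1.
Definition succ (G : graph) (v : 'I_(nv G)) : option 'I_(nv G) := (tagged G v).1.2.
Definition fr (G : graph) (v : 'I_(nv G)) : nat := (tagged G v).2.

Definition iso (G H : graph) : Prop :=
  exists h : 'I_(nv G) -> 'I_(nv H), bijective h /\
    forall v, [/\ dec H (h v) = dec G v, succ H (h v) = omap h (succ G v)
                & fr H (h v) = fr G v].

Definition isaut (G : graph) (p : {perm 'I_(nv G)}) : bool :=
  [forall v, [&& dec G (p v) == dec G v, succ G (p v) == omap p (succ G v)
             & fr G (p v) == fr G v]].
Definition sigma (G : graph) : nat := #|[set p | isaut G p]|.

Definition adj (G : graph) : rel 'I_(nv G) :=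
  fun u w => (succ G u == Some w) || (succ G w == Some u).
Definition connected (G : graph) : bool :=
  [forall u, [forall w, connect (adj G) u w]].

Definition is_tree (G : graph) : bool :=
  (#|[set v | succ G v == None]| == 1)%N && connected G.
Definition is_aroma (G : graph) : bool :=
  [&& (0 < nv G)%N, [forall v, succ G v != None] & connected G].

Definition indeg (G : graph) (v : 'I_(nv G)) : nat := #|[set u | succ G u == Some v]|.

Definition Phi (G : graph) : monomial :=
  [seq (dec G v, (indeg G v + fr G v)%:Z - 1) | v <- enum 'I_(nv G)].

Definition remove_free (G : graph) (v : 'I_(nv G)) : graph :=
  existT _ (nv G) [ffun u => if u == v then (dec G u, succ G u, (fr G u).-1)
                             else tagged G u].

(* formal K-linear combinations of graphs; they denote elements of the free
   K-vector space on isomorphism classes, via the coefficient function [coef] *)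
Definition lincomb := seq (K * graph).
Definition coef (L : lincomb) (G : graph) : K :=
  \sum_(x <- L | `[< iso x.2 G >]) x.1.

Definition delta (G : graph) : seq graph :=
  [seq remove_free G v | v <- enum 'I_(nv G) & (0 < fr G v)%N].
Definition delta_lc (L : lincomb) : lincomb :=
  flatten [seq [seq (x.1, H) | H <- delta x.2] | x <- L].

Definition reps (l : seq graph) : seq graph :=
  foldr (fun G acc => if has (fun H => `[< iso G H >]) acc then acc else G :: acc)
        [::] l.

(* A finite list containing (up to iso) every graph G with Phi G = x^s:
   such G has size s vertices, and r_v <= j_v + 1 < bound s. *)
Definition bound (s : monomial) : nat := (\max_(x <- s) `|x.2|%N).+2.
Definition mkgraph n B (g : {ffun 'I_n -> C * option 'I_n * 'I_B}) : graph :=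
  existT _ n [ffun v => ((g v).1.1, (g v).1.2, val (g v).2)].
Definition cands (s : monomial) : seq graph :=
  [seq @mkgraph (size s) (bound s) g | g <- enum {ffun 'I_(size s) -> C * option 'I_(size s) * 'I_(bound s)}].

(* b = true : the copy Mbar_0 (aromas);  b = false : the copy Mbar_{-1} (trees) *)
Definition shape (b : bool) (G : graph) : bool := if b then is_aroma G else is_tree G.

Definition jaro (b : bool) (s : monomial) : lincomb :=
  [seq ((mfact s)%:R / (sigma G)%:R, G)
  | G <- reps [seq G <- cands s | shape b G && perm_eq (Phi G) s]].

Definition jaro_poly (b : bool) (P : poly) : lincomb :=
  flatten [seq [seq (p.1 * x.1, x.2) | x <- jaro b p.2] | p <- P].

End Aromas.

Arguments valid_monomial {C}.
Arguments weight {C}.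
Arguments mfact {C}.
Arguments dbar {C}.
Arguments nv {C}.
Arguments dec {C}.
Arguments succ {C}.
Arguments fr {C}.
Arguments iso {C}.
Arguments sigma {C}.
Arguments is_tree {C}.
Arguments is_aroma {C}.
Arguments indeg {C}.
Arguments Phi {C}.
Arguments remove_free {C}.
Arguments coef {C K}.
Arguments delta {C}.
Arguments delta_lc {C K}.
Arguments reps {C}.
Arguments cands {C}.
Arguments shape {C}.
Arguments jaro {C}.
Arguments jaro_poly {C K}.

(* Write G + w for G with one more free edge at the vertex w. An isomorphism p from R with
   a free edge removed at v onto G is the same as an isomorphism from R onto G + p(v), so
   counting the pairs (v, p) in two ways gives
     #{v | deltabar_v R ~ G} sigma(G) = #{w | R ~ G + w} sigma(R),
   and the coefficient of G in deltabar jbar(x^k) is k!/sigma(G) #{w | Phibar(G + w) = x^k}.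
   Adding a free edge at w raises the index of the variable of w by one, so Phibar(G + w) = x^k
   says that Phibar(G) is x^k with one variable x^a_j (j >= 0) lowered to x^a_{j-1}. The
   multinomial identity  k^a_j (k - e^a_j + e^a_{j-1})! = k! (k^a_{j-1} + 1)  then matches
   this count with the coefficient of G in jbar(dbar x^k). *)

From Pilot Require Import Defs.
From HB Require Import structures.
From mathcomp Require Import all_boot all_order all_algebra.
From mathcomp Require Import fingroup perm boolp.
From mathcomp Require Import zify ring.
Import Order.TTheory GRing.Theory Num.Theory.
Local Open Scope ring_scope.
Set Implicit Arguments. Unset Strict Implicit.

Lemma sum_undup_count (T : eqType) (r : seq T) (F : T -> nat) :
  (\sum_(x <- r) F x = \sum_(x <- undup r) count_mem x r * F x)%N.
Proof.
rewrite -big_undup_iterop_count; apply: eq_bigr => x _.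
by rewrite Monoid.iteropE iter_addn_0 mulnC.
Qed.

Lemma card_set_sum (T : finType) (P : pred T) : #|[set x | P x]| = (\sum_x P x)%N.
Proof.
by rewrite -sum1_card big_mkcond /=; apply: eq_bigr => x _; rewrite inE; case: (P x).
Qed.

Lemma count_enum_sum (T : finType) (P : pred T) : count P (enum T) = (\sum_x P x)%N.
Proof. by rewrite -sum1_count big_mkcond big_enum /=; apply: eq_bigr => x _; case: (P x). Qed.

Lemma count_map_enum (T : finType) (S : Type) (f : T -> S) (P : pred S) :
  count P [seq f x | x <- enum T] = (\sum_x P (f x))%N.
Proof. by rewrite count_map count_enum_sum. Qed.

Lemma connect_homo (T T' : finType) (e : rel T) (e' : rel T') (f : T -> T') :
  {homo f : x y / e x y >-> e' x y} -> {homo f : x y / connect e x y >-> connect e' x y}.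
Proof.
move=> ef x y /connectP [q pq ->]; elim: q x pq => [|z q IH] x /=; first by rewrite connect0.
by case/andP => /ef exz /IH; apply: connect_trans; apply: connect1.
Qed.

Section Monomials.
Variable C : finType.
Implicit Types (x y : var C) (s t l : monomial C).

Definition lower1 x : var C := (x.1, x.2 - 1).
Definition raise1 x : var C := (x.1, x.2 + 1).
Definition lower_var s x : monomial C := lower1 x :: rem x s.

Lemma raise1K : cancel raise1 lower1.
Proof. by case=> a j; rewrite /lower1 /raise1 /= addrK. Qed.

Lemma lower1K : cancel lower1 raise1.
Proof. by case=> a j; rewrite /lower1 /raise1 /= subrK. Qed.

Lemma lower1_neq x : (lower1 x == x) = false.
Proof.
case: x => a j; rewrite /lower1 xpair_eqE /= eqxx /=; apply/negbTE.
by rewrite -subr_eq0 addrAC subrr add0r oppr_eq0 oner_eq0.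
Qed.

Lemma perm_lower_var s l x : x \in s ->
  perm_eq l (lower_var s x) = perm_eq (x :: l) (lower1 x :: s).
Proof.
move=> xs; have /permPr <- : perm_eq (x :: lower_var s x) (lower1 x :: s).
  apply/seq.permP => a /=.
  by rewrite [count a s](seq.permP (perm_to_rem xs)) /= addnCA.
by rewrite perm_cons.
Qed.

Lemma mfact_perm t u : perm_eq t u -> mfact t = mfact u.
Proof.
move=> P; rewrite /mfact (perm_big _ (perm_undup (perm_mem P))).
by apply: eq_bigr => y _; rewrite (seq.permP P).
Qed.

Lemma mfactE t U : uniq U -> {subset t <= U} ->
  mfact t = (\prod_(y <- U) (count_mem y t)`!)%N.
Proof.
move=> uU sub; rewrite /mfact [RHS](bigID (fun y => y \in t)) /=.
rewrite [X in (_ * X)%N]big1 ?muln1; last by move=> y /count_memPn ->.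
rewrite -[RHS]big_filter; apply: perm_big; apply: uniq_perm; first exact: undup_uniq.
  exact: filter_uniq.
by move=> y; rewrite mem_undup mem_filter; case: (y \in t) (sub y) => // ->.
Qed.

Lemma mfact_cons x t : mfact (x :: t) = (mfact t * (count_mem x t).+1)%N.
Proof.
pose U := undup (x :: t).
have [uU xU] : uniq U /\ x \in U by rewrite undup_uniq mem_undup mem_head.
have tU : {subset t <= U} by move=> y yt; rewrite mem_undup inE yt orbT.
have xtU : {subset x :: t <= U} by move=> y; rewrite mem_undup.
rewrite (mfactE uU xtU) (mfactE uU tU).
rewrite !(bigD1_seq x xU uU) /= eqxx add1n factS.
rewrite (eq_bigr (fun y => (count_mem y t)`!)) => [|y /negbTE yx]; last by rewrite eq_sym yx.
ring.
Qed.

Lemma mfact_lower_var s x : x \in s ->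
  (count_mem x s * mfact (lower_var s x) = mfact s * (count_mem (lower1 x) s).+1)%N.
Proof.
move=> xs; rewrite (mfact_perm (perm_to_rem xs)) mfact_cons mfact_cons.
have cx : (0 < count_mem x s)%N by rewrite -has_count has_pred1.
rewrite !count_mem_rem eqxx [x == _]eq_sym lower1_neq subn0 subn1 prednK //.
ring.
Qed.

(* Both sides equal s! times the sum, over the x with x :: l ~ lower1 x :: s, of the
   multiplicity of lower1 x in l: on the left by mfact_lower_var, on the right with
   x = raise1 y. *)
Lemma sum_mfact_lower_var s l :
  (\sum_(x <- s) perm_eq l (lower_var s x) * mfact (lower_var s x) =
   mfact s * count (fun y => perm_eq (raise1 y :: l) (y :: s)) l)%N.
Proof.
pose Q x := perm_eq (x :: l) (lower1 x :: s).
pose F x := (Q x * count_mem (lower1 x) l)%N.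
have -> : (\sum_(x <- s) perm_eq l (lower_var s x) * mfact (lower_var s x) =
           mfact s * \sum_(x <- undup s) F x)%N.
  rewrite [LHS]sum_undup_count big_distrr /= !big_seq; apply: eq_bigr => x.
  rewrite mem_undup => xs; rewrite /F perm_lower_var //.
  case Qx: (perm_eq _ _); rewrite /Q Qx ?mul0n ?muln0 //.
  rewrite !mul1n mfact_lower_var //; congr (_ * _)%N.
  move/seq.permP: Qx => /(_ (pred1 (lower1 x))) /=.
  by rewrite [x == _]eq_sym lower1_neq eqxx add0n add1n => ->.
have -> : count (fun y => perm_eq (raise1 y :: l) (y :: s)) l =
          \sum_(x <- map raise1 (undup l)) F x.
  rewrite -sum1_count big_mkcond /= sum_undup_count big_map; apply: eq_bigr => y _.
  by rewrite /F /Q raise1K mulnC; case: ifP.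
congr (_ * _)%N; apply: perm_big_supp; apply: uniq_perm.
- by rewrite filter_uniq ?undup_uniq.
- by rewrite filter_uniq ?(map_inj_uniq (can_inj raise1K)) ?undup_uniq.
move=> x; rewrite !mem_filter mem_undup -[x in x \in map _ _]lower1K.
rewrite (mem_map (can_inj raise1K)) mem_undup /F.
case Qx: (Q x) => //=; rewrite mul1n -lt0n -has_count has_pred1.
have xs : x \in s by have := perm_mem Qx x; rewrite mem_head inE eq_sym lower1_neq.
by rewrite xs andbb andbT.
Qed.

Lemma lower_var_ge0 l s x :
  all (fun y : var C => -1 <= y.2) l -> perm_eq l (lower_var s x) -> 0 <= x.2.
Proof.
move=> /allP l_ge /perm_mem/(_ (lower1 x)); rewrite mem_head => /l_ge.
by rewrite lerBrDr addNr.
Qed.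

Lemma zip_iota_nth x0 s :
  zip (iota 0 (size s)) s = [seq (j, nth x0 s j) | j <- iota 0 (size s)].
Proof.
rewrite -{2}(mkseq_nth x0 s) /mkseq.
by elim: (iota 0 (size s)) => //= j t ->.
Qed.

Lemma lower_atE x0 s i : (i < size s)%N ->
  lower_at C s i = set_nth x0 s i (lower1 (nth x0 s i)).
Proof.
move=> lt_i_s; rewrite /lower_at (zip_iota_nth x0) -map_comp.
apply: (@eq_from_nth _ x0) => [|j]; rewrite size_map size_iota.
  by rewrite size_set_nth; apply/esym/maxn_idPr.
move=> lt_j_s; rewrite (nth_map 0%N) ?size_iota // nth_iota // nth_set_nth /=.
by case: eqP => // ->.
Qed.

Lemma perm_lower_at s i x : (i, x) \in zip (iota 0 (size s)) s ->
  perm_eq (lower_at C s i) (lower_var s x).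
Proof.
rewrite (zip_iota_nth x) => /mapP [j]; rewrite mem_iota add0n => /andP [_ js] [-> xE].
have xs : x \in s by rewrite xE mem_nth.
apply/seq.permP => a; rewrite (lower_atE x js) count_set_nth_ltn // -xE /=.
rewrite [count a s](seq.permP (perm_to_rem xs)) /=; lia.
Qed.

Variable K : fieldType.

Lemma sum_dbar s (F : monomial C -> K) : {homo F : t u / perm_eq t u >-> t = u} ->
  \sum_(p <- dbar K s) p.1 * F p.2 = \sum_(x <- s | 0 <= x.2) F (lower_var s x).
Proof.
move=> F_perm; rewrite /dbar big_map big_filter big_seq_cond.
rewrite (eq_bigr (fun p => F (lower_var s p.2))) => [|[i x] /andP [ix _]]; last first.
  by rewrite mul1r; apply/F_perm/perm_lower_at.
rewrite -big_seq_cond -(big_map snd (fun x => 0 <= x.2) (fun x => F (lower_var s x))).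
by rewrite [map _ _]unzip2_zip ?size_iota.
Qed.

End Monomials.

Section Isomorphisms.
Variable C : finType.
Implicit Types G H I R X : graph C.

Lemma iso_refl G : iso G G.
Proof.
exists id; split; first exact: (Bijective (fun _ => erefl) (fun _ => erefl)).
by move=> v; split => //; case: (succ G v).
Qed.

Lemma iso_sym G H : iso G H -> iso H G.
Proof.
case=> h [[k hK kK] P]; exists k; split; first exact: (Bijective kK hK).
move=> u; have := P (k u); rewrite kK => -[d s f]; split.
- by rewrite d.
- by rewrite s; case: (succ G (k u)) => //= x; rewrite hK.
- by rewrite f.
Qed.

Lemma iso_trans G H I : iso G H -> iso H I -> iso G I.
Proof.
case=> h1 [b1 P1] [h2 [b2 P2]]; exists (h2 \o h1); split; first exact: bij_comp.
move=> v; have [d1 s1 f1] := P1 v; have [d2 s2 f2] := P2 (h1 v); split => /=.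
- by rewrite d2 d1.
- by rewrite s2 s1; case: (succ G v).
- by rewrite f2 f1.
Qed.

Lemma iso_nv G H : iso G H -> nv G = nv H.
Proof. by case=> h [hb _]; have := bij_eq_card hb; rewrite !card_ord. Qed.

Definition gdata n := {ffun 'I_n -> C * option 'I_n * nat}.
Definition graph_of n (g : gdata n) : graph C := existT _ n g.

Definition isom n (p : {perm 'I_n}) (g h : gdata n) : bool :=
  [forall v, h (p v) == ((g v).1.1, omap p (g v).1.2, (g v).2)].
Definition Aut n (g : gdata n) : {set {perm 'I_n}} := [set p | isom p g g].

Section FixedSize.
Variable n : nat.
Implicit Types (g h k : gdata n) (p q : {perm 'I_n}).

Lemma isomP p g h :
  reflect (forall v, h (p v) = ((g v).1.1, omap p (g v).1.2, (g v).2)) (isom p g h).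
Proof. by apply: (iffP forallP) => E v; apply/eqP. Qed.

Lemma iso_graph_ofP g h : iso (graph_of g) (graph_of h) <-> exists p, isom p g h.
Proof.
split.
- case=> f [fb P]; have f_inj := bij_inj fb; exists (perm f_inj).
  apply/isomP => v; rewrite permE; case: (P v); rewrite /dec /succ /fr /=.
  have -> : omap (perm f_inj) (g v).1.2 = omap f (g v).1.2.
    by case: ((g v).1.2) => //= x; rewrite permE.
  by case: (h (f v)) => [[a o] r] /= -> -> ->.
- case=> p /isomP P; exists p; split; first exact: (injF_bij (@perm_inj _ p)).
  by move=> v; rewrite /dec /succ /fr /= P.
Qed.

Lemma isom1 g : isom 1 g g.
Proof.
apply/isomP => v; rewrite perm1; case: (g v) => [[a o] r] /=.
by case: o => //= w; rewrite perm1.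
Qed.

Lemma isomM p q g h k : isom p g h -> isom q h k -> isom (p * q)%g g k.
Proof.
move=> /isomP P /isomP Q; apply/isomP => v; rewrite permM Q P /=.
by case: ((g v).1.2) => //= a; rewrite permM.
Qed.

Lemma isomV p g h : isom p g h -> isom p^-1%g h g.
Proof.
move=> /isomP P; apply/isomP => u; have := P (p^-1%g u); rewrite permKV => ->.
by case: (g (p^-1%g u)) => [[a o] r] /=; case: o => //= w; rewrite permK.
Qed.

Lemma isom_rcoset q g h : isom q g h -> [set p | isom p g h] = (Aut g :* q)%g.
Proof.
move=> Hq; apply/setP => p; rewrite mem_rcoset !inE; apply/idP/idP => Hp.
- exact: isomM Hp (isomV Hq).
- by rewrite -(mulgKV q p); apply: isomM Hp Hq.
Qed.

Lemma isom_lcoset q g h : isom q g h -> [set p | isom p g h] = (q *: Aut h)%g.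
Proof.
move=> Hq; apply/setP => p; rewrite mem_lcoset !inE; apply/idP/idP => Hp.
- exact: isomM (isomV Hq) Hp.
- by rewrite -(mulKVg q p); apply: isomM Hq Hp.
Qed.

Lemma isom_set0 g h : ~ iso (graph_of g) (graph_of h) -> [set p | isom p g h] = set0.
Proof.
move=> N; apply/setP => p; rewrite !inE; apply/negP => Hp.
by apply: N; apply/iso_graph_ofP; exists p.
Qed.

Lemma card_isom g h :
  #|[set p | isom p g h]| = (`[< iso (graph_of g) (graph_of h) >] * #|Aut g|)%N.
Proof.
by case: asboolP => [/iso_graph_ofP [q /isom_rcoset ->]|/isom_set0 ->];
  rewrite ?card_rcoset ?mul1n ?cards0.
Qed.

Lemma card_isom_r g h :
  #|[set p | isom p g h]| = (`[< iso (graph_of g) (graph_of h) >] * #|Aut h|)%N.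
Proof.
by case: asboolP => [/iso_graph_ofP [q /isom_lcoset ->]|/isom_set0 ->];
  rewrite ?card_lcoset ?mul1n ?cards0.
Qed.

Lemma sigma_graph_of g : sigma (graph_of g) = #|Aut g|.
Proof.
apply: eq_card => p; rewrite !inE; apply: eq_forallb => v; rewrite /dec /succ /fr /=.
by case: (g (p v)) => [[a o] r] /=; rewrite !xpair_eqE andbA.
Qed.

Lemma isom_succ p g h u : isom p g h ->
  succ (graph_of h) (p u) = omap p (succ (graph_of g) u).
Proof. by move=> /isomP P; rewrite /succ /= P. Qed.

Lemma omap_perm_eq p (o : option 'I_n) w : (omap p o == Some (p w)) = (o == Some w).
Proof. by case: o => //= a; rewrite !(inj_eq (@Some_inj _)) (inj_eq perm_inj). Qed.

Lemma isom_indeg p g h v : isom p g h -> indeg (graph_of h) (p v) = indeg (graph_of g) v.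
Proof.
move=> I; rewrite /indeg !card_set_sum (reindex_inj (@perm_inj _ p)).
by apply: eq_bigr => u _; rewrite (isom_succ u I) omap_perm_eq.
Qed.

Lemma isom_Phi p g h : isom p g h -> perm_eq (Phi (graph_of h)) (Phi (graph_of g)).
Proof.
move=> I; rewrite /Phi /=.
have E : perm_eq (enum 'I_n) (map p (enum 'I_n)).
  apply: uniq_perm; rewrite ?enum_uniq ?(map_inj_uniq perm_inj) ?enum_uniq // => u.
  by rewrite mem_enum -[u](permKV p) map_f ?mem_enum.
apply: perm_trans (perm_map _ E) _; rewrite -map_comp.
erewrite eq_map; first exact: perm_refl.
by move=> v /=; rewrite (isom_indeg v I) /dec /fr /= (isomP _ _ _ I v).
Qed.

Lemma isom_adj p g h u w : isom p g h ->
  @adj C (graph_of h) (p u) (p w) = @adj C (graph_of g) u w.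
Proof. by move=> I; rewrite /adj !(isom_succ _ I) !omap_perm_eq. Qed.

Lemma isom_connected p g h : isom p g h ->
  @connected C (graph_of g) -> @connected C (graph_of h).
Proof.
move=> I /forallP Cg; apply/forallP => a; apply/forallP => b.
rewrite -[a](permKV p) -[b](permKV p).
apply: (connect_homo (e := @adj C (graph_of g))).
  by move=> x y; rewrite (isom_adj _ _ I).
exact/forallP/Cg.
Qed.

Lemma isom_shape b p g h : isom p g h -> Defs.shape b (graph_of h) = Defs.shape b (graph_of g).
Proof.
move=> I; have conn : @connected C (graph_of h) = @connected C (graph_of g).
  by apply/idP/idP; [apply: isom_connected (isomV I) | apply: isom_connected I].
case: b; rewrite /Defs.shape.
- rewrite /is_aroma conn; congr (_ && (_ && _)); apply/forallP/forallP => H v.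
  + by have := H (p v); rewrite (isom_succ _ I); case: (succ _ _).
  + by rewrite -(permKV p v) (isom_succ _ I); case: (succ _ _) (H (p^-1%g v)).
- rewrite /is_tree conn !card_set_sum (reindex_inj (@perm_inj _ p)).
  by congr ((_ == _) && _); apply: eq_bigr => u _; rewrite (isom_succ _ I); case: (succ _ _).
Qed.

End FixedSize.

Lemma sigma_gt0 G : (0 < sigma G)%N.
Proof.
case: G => n g; rewrite sigma_graph_of card_gt0; apply/set0Pn.
by exists 1%g; rewrite inE isom1.
Qed.

Lemma iso_invariants R X : iso R X ->
  [/\ sigma R = sigma X, forall b, Defs.shape b R = Defs.shape b X & perm_eq (Phi R) (Phi X)].
Proof.
case: R X => [m r] [k x] I; have /= eq_mk := iso_nv I; subst k.
have [p P] := (iso_graph_ofP r x).1 I.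
split; last by rewrite perm_sym (isom_Phi P).
- have := card_isom r x; rewrite card_isom_r (asboolT I) !mul1n.
  by rewrite !sigma_graph_of.
- by move=> b; rewrite (isom_shape b P).
Qed.

End Isomorphisms.

Section Coefficients.
Variables (C : finType) (K : fieldType).
Implicit Types (G R X : graph C) (s t : monomial C) (L : lincomb C K).

Definition Phi_at n (g : gdata C n) v : var C :=
  ((g v).1.1, (indeg (graph_of g) v + (g v).2)%:Z - 1).

Lemma Phi_graph_of n (g : gdata C n) : Phi (graph_of g) = map (Phi_at g) (enum 'I_n).
Proof. by []. Qed.

Lemma Phi_ge G : all (fun y : var C => -1 <= y.2) (Phi G).
Proof. by apply/allP => y /mapP [v _ ->]; rewrite lerBrDr addNr. Qed.

Lemma fr_lt_bound s n (g : gdata C n) v :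
  perm_eq (Phi (graph_of g)) s -> ((g v).2 < bound C s)%N.
Proof.
move=> Ph; have vs : Phi_at g v \in s by rewrite -(perm_mem Ph) map_f ?mem_enum.
have := @leq_bigmax_seq _ s xpredT (fun y : var C => `|y.2|%N) _ vs isT; rewrite /bound /=.
have k_le (k : nat) : (k <= `|k%:Z - 1| + 1)%N.
  by case: k => [|k] //; rewrite -addn1 PoszD addrK absz_nat.
move=> le_max; rewrite ltnS; apply: leq_trans (leq_addl (indeg (graph_of g) v) _) _.
by apply: leq_trans (k_le _) _; rewrite addn1 ltnS.
Qed.

Lemma reps_count (l : seq (graph C)) X :
  count (fun R => `[< iso R X >]) (reps l) = has (fun R => `[< iso R X >]) l.
Proof.
elim: l => [|G l IH] //=.
have hasE : has (fun R => `[< iso R X >]) (reps l) = has (fun R => `[< iso R X >]) l.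
  by rewrite has_count IH lt0b.
case: ifP => [/hasP [H Hl /asboolP GH]|/negbT/hasPn noG]; rewrite /= IH.
- case: asboolP => //= GX; suff -> : has (fun R => `[< iso R X >]) l by [].
  rewrite -hasE; apply/hasP; exists H => //.
  exact/asboolP/(iso_trans (iso_sym GH) GX).
- case: asboolP => //= GX; rewrite -hasE; case: hasP => //= -[H Hl /asboolP HX].
  by exfalso; move/asboolPn: (noG H Hl); apply; apply: iso_trans GX (iso_sym HX).
Qed.

Lemma has_cands b s X :
  has (fun R => `[< iso R X >]) [seq R <- cands s | Defs.shape b R && perm_eq (Phi R) s]
  = Defs.shape b X && perm_eq (Phi X) s.
Proof.
apply/hasP/andP => [[R] | [Sh Ph]].
  rewrite mem_filter => /andP [/andP [Sh Ph] _] /asboolP /iso_invariants [_ shE PP].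
  by rewrite -shE Sh (perm_trans _ Ph) // perm_sym.
case: X Sh Ph => n x Sh Ph.
have n_s : n = size s by rewrite -(perm_size Ph) size_map size_enum_ord.
subst n; pose gg : {ffun 'I_(size s) -> C * option 'I_(size s) * 'I_(bound C s)} :=
  [ffun v => ((x v).1.1, (x v).1.2, inord (x v).2)].
have gg_x : mkgraph C _ _ gg = existT _ (size s) x.
  congr existT; apply/ffunP => v; rewrite !ffunE /= inordK; first by case: (x v) => [[]].
  exact: fr_lt_bound Ph.
exists (mkgraph C _ _ gg); last by rewrite gg_x; apply/asboolP/iso_refl.
by rewrite mem_filter gg_x Sh Ph /= -gg_x map_f ?mem_enum.
Qed.


Lemma coef_jaro b t X : coef (jaro K b t) X =
  ((Defs.shape b X && perm_eq (Phi X) t) * mfact t)%:R / (sigma X)%:R.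
Proof.
rewrite /coef /jaro big_map.
rewrite (eq_bigr (fun=> (mfact t)%:R / (sigma X)%:R)); last first.
  by move=> R /asboolP /iso_invariants [-> _ _].
rewrite big_const_seq iter_addr_0 reps_count has_cands.
by case: (_ && _); rewrite ?mul1n ?mul0n ?mul0r.
Qed.

Lemma coef_delta L X :
  coef (delta_lc L) X = \sum_(x <- L) x.1 * (count (fun H => `[< iso H X >]) (delta x.2))%:R.
Proof.
rewrite /coef /delta_lc big_flatten big_map; apply: eq_bigr => x _.
by rewrite big_map big_const_seq iter_addr_0 mulr_natr.
Qed.

Lemma coef_jaro_poly b (P : Defs.poly C K) X :
  coef (jaro_poly b P) X = \sum_(p <- P) p.1 * coef (jaro K b p.2) X.
Proof.
rewrite /coef /jaro_poly big_flatten big_map; apply: eq_bigr => p _.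
by rewrite big_map mulr_sumr.
Qed.

End Coefficients.

Section FreeEdges.
Variable C : finType.

Definition rm_free n (g : gdata C n) v : gdata C n :=
  [ffun u => if u == v then ((g u).1.1, (g u).1.2, (g u).2.-1) else g u].
Definition add_free n (g : gdata C n) w : gdata C n :=
  [ffun u => if u == w then ((g u).1.1, (g u).1.2, (g u).2.+1) else g u].

Lemma count_delta n (r : gdata C n) (P : pred (graph C)) :
  count P (delta (graph_of r)) = (\sum_v ((0 < (r v).2)%N && P (graph_of (rm_free r v))))%N.
Proof.
rewrite /delta count_map count_filter count_enum_sum; apply: eq_bigr => v _.
by rewrite /= andbC.
Qed.

Lemma isom_rm_free n (p : {perm 'I_n}) (r g : gdata C n) v :
  (0 < (r v).2)%N && isom p (rm_free r v) g = isom p r (add_free g (p v)).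
Proof.
apply/idP/idP.
- case/andP=> r0 /isomP P; apply/isomP => u; rewrite ffunE (inj_eq perm_inj) P ffunE.
  by case: eqP => [->|_] //=; rewrite prednK.
- move=> /isomP P; have := P v; rewrite ffunE eqxx => Ev.
  apply/andP; split; first by move: Ev; case: (g (p v)) => [[a o] k] [_ _ <-].
  apply/isomP => u; have := P u; rewrite !ffunE (inj_eq perm_inj).
  case: eqP => [->|_]; last by [].
  by move: Ev; case: (g (p v)) => [[a o] k] /= [-> -> <-] _.
Qed.

(* Both sides count the pairs (v, p) with p an isomorphism from R minus a free edge at v
   onto g, that is (isom_rm_free) from R onto g + p(v). *)
Lemma count_delta_iso R n (g : gdata C n) :
  (count (fun H => `[< iso H (graph_of g) >]) (delta R) * sigma (graph_of g) =
   (\sum_w `[< iso R (graph_of (add_free g w)) >]) * sigma R)%N.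
Proof.
case: R => m r; case: (eqVneq m n) g => [<-|ne] g; last first.
  rewrite big1 ?mul0n => [|w _]; last by case: asboolP => // /iso_nv /= m_n; case/eqP: ne.
  apply/eqP; rewrite muln_eq0 -leqn0 leqNgt -has_count; apply/orP; left.
  by apply/hasP => -[H /mapP [v _ ->] /asboolP /iso_nv /= m_n]; case/eqP: ne.
rewrite count_delta !sigma_graph_of !big_distrl /=.
transitivity (\sum_v \sum_p ((0 < (r v).2) && isom p (rm_free r v) g))%N.
  apply: eq_bigr => v _; case: (0 < (r v).2)%N; last by rewrite mul0n big1.
  by rewrite /= -card_set_sum [RHS]card_isom_r.
transitivity (\sum_w \sum_p isom p r (add_free g w))%N; last first.
  by apply: eq_bigr => w _; rewrite -card_set_sum card_isom.
rewrite exchange_big [RHS]exchange_big; apply: eq_bigr => p _.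
by rewrite [RHS](reindex_inj (@perm_inj _ p)); apply: eq_bigr => v _; rewrite isom_rm_free.
Qed.

Lemma indeg_add_free n (g : gdata C n) w v :
  indeg (graph_of (add_free g w)) v = indeg (graph_of g) v.
Proof.
rewrite /indeg /succ /=; apply: eq_card => u; rewrite !inE ffunE.
by case: (u == w).
Qed.

Lemma Phi_at_add_free n (g : gdata C n) w v :
  Phi_at (add_free g w) v = if v == w then raise1 (Phi_at g v) else Phi_at g v.
Proof.
rewrite /Phi_at indeg_add_free ffunE; case: (v == w) => //=.
by rewrite /raise1 /= -addn1 addnA PoszD addrAC.
Qed.

Lemma perm_Phi_add_free n (g : gdata C n) w :
  perm_eq (Phi_at g w :: Phi (graph_of (add_free g w)))
          (raise1 (Phi_at g w) :: Phi (graph_of g)).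
Proof.
apply/seq.permP => a; rewrite !Phi_graph_of /= (count_map_enum (Phi_at g)).
rewrite (count_map_enum (Phi_at (add_free g w))).
rewrite (bigD1 w) // [in RHS](bigD1 w) //= Phi_at_add_free eqxx.
rewrite (eq_bigr (fun v => a (Phi_at g v) : nat)) => [|v /negbTE vw]; last first.
  by rewrite /= Phi_at_add_free vw.
by rewrite addnCA.
Qed.

Lemma shape_eq_succ b n (g h : gdata C n) : (forall u, (h u).1.2 = (g u).1.2) ->
  Defs.shape b (graph_of h) = Defs.shape b (graph_of g).
Proof.
move=> E; have adjE : @adj C (graph_of h) =2 @adj C (graph_of g).
  by move=> x y; rewrite /adj /succ /= !E.
have connE : @connected C (graph_of h) = @connected C (graph_of g).
  by apply: eq_forallb => x; apply: eq_forallb => y; rewrite (eq_connect adjE).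
case: b; rewrite /Defs.shape.
- rewrite /is_aroma connE; congr (_ && (_ && _)).
  by apply: eq_forallb => v; rewrite /succ /= E.
- rewrite /is_tree connE; congr ((_ == _) && _).
  by apply: eq_card => v; rewrite !inE /succ /= E.
Qed.

Lemma sum_shape_Phi_add_free b s n (g : gdata C n) :
  (\sum_w (Defs.shape b (graph_of (add_free g w)) && perm_eq (Phi (graph_of (add_free g w))) s)
   = Defs.shape b (graph_of g) *
     count (fun y => perm_eq (raise1 y :: Phi (graph_of g)) (y :: s)) (Phi (graph_of g)))%N.
Proof.
have shE w : Defs.shape b (graph_of (add_free g w)) = Defs.shape b (graph_of g).
  by apply: shape_eq_succ => u; rewrite ffunE; case: (u == w).
under eq_bigr => w _ do rewrite shE.
case: (Defs.shape b _); last by rewrite big1.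
rewrite mul1n [in RHS]Phi_graph_of count_map_enum; apply: eq_bigr => w _.
by rewrite /= -(perm_cons (Phi_at g w)) (permPl (perm_Phi_add_free g w)).
Qed.

End FreeEdges.

Section Main.
Variables (C : finType) (K : fieldType).

Lemma coef_jaro_dbar b s (X : graph C) :
  coef (jaro_poly b (dbar K s)) X =
  (Defs.shape b X *
   (mfact s * count (fun y => perm_eq (raise1 y :: Phi X) (y :: s)) (Phi X)))%:R
  / (sigma X)%:R.
Proof.
have jaro_perm : {homo (fun t => coef (jaro K b t) X) : t u / perm_eq t u >-> t = u}.
  by move=> t u tu; rewrite !coef_jaro (mfact_perm tu) (permPr tu).
rewrite coef_jaro_poly (sum_dbar s jaro_perm).
under eq_bigr => x _ do rewrite coef_jaro.
rewrite -mulr_suml -natr_sum big_mkcond /=; congr (_%:R / _).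
case: (Defs.shape b X); last by rewrite big1 // => x _; rewrite mul0n if_same.
rewrite mul1n -sum_mfact_lower_var; apply: eq_bigr => x _.
(* the condition [0 <= j] of dbar is vacuous here, as Phi only produces indices [>= -1] *)
case: ifP => // /negbT x_lt0; case Px: (perm_eq _ _) => //.
by rewrite (lower_var_ge0 (Phi_ge X) Px) in x_lt0.
Qed.

Hypothesis K_pchar0 : [pchar K] =i pred0.

Lemma sigma_neq0 (G : graph C) : (sigma G)%:R != 0 :> K.
Proof. by rewrite ((pcharf0P K).1 K_pchar0) -lt0n sigma_gt0. Qed.

Lemma coef_delta_jaro b s n (g : gdata C n) :
  coef (delta_lc (jaro K b s)) (graph_of g) =
  (mfact s * \sum_w (Defs.shape b (graph_of (add_free g w)) &&
                     perm_eq (Phi (graph_of (add_free g w))) s))%:R / (sigma (graph_of g))%:R.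
Proof.
rewrite coef_delta /jaro big_map.
transitivity (\sum_(R <- reps [seq R <- cands s | Defs.shape b R && perm_eq (Phi R) s])
  ((mfact s)%:R / (sigma (graph_of g))%:R : K) *
  (\sum_w `[< iso R (graph_of (add_free g w)) >])%:R).
  apply: eq_bigr => R _ /=; have := congr1 (fun m => m%:R : K) (count_delta_iso R g).
  rewrite /= !natrM => E; rewrite -[X in _ * X](mulfK (sigma_neq0 (graph_of g))) E.
  by field; rewrite !sigma_neq0.
rewrite -mulr_sumr -natr_sum exchange_big /= natrM mulrAC.
congr (_ * _%:R * _); apply: eq_big => // w _.
rewrite -has_cands -reps_count -sum1_count [RHS]big_mkcond.
by apply: eq_bigr => R _; case: asboolP.
Qed.

End Main.

Unset Implicit Arguments.

Theorem corollary4p9 (C : finType) (K : fieldType) (hK : [pchar K] =i pred0)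
  (b : bool) (s : monomial C) (hs : valid_monomial s)
  (hw : (if b then 0 else -1) <= weight s) (G : graph C) :
  coef (delta_lc (jaro K b s)) G = coef (jaro_poly b (dbar K s)) G.
Proof.
case: G => n g.
rewrite (coef_delta_jaro hK) coef_jaro_dbar sum_shape_Phi_add_free.
by rewrite mulnCA.
Qed.
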